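(* Let $X$ be a compact metric space and $f\colon X\to X$ continuous with $h_{\mathrm{top}}(f)<\infty$. If $\Phi,\Psi\in C(X)^d$ satisfy condition (Q), then $I_0(\Phi,\Psi)=\operatorname{int}I(\Phi,\Psi)$.
   Context: $\mathcal{M}^f(X)$ is the set of $f$-invariant Borel probability measures. $\Phi=(\varphi_1,\dots,\varphi_d)$, $\Psi=(\psi_1,\dots,\psi_d)$, $\alpha*\Psi=(\alpha_i\psi_i)_i$. Condition (Q): $\int\psi_i\,d\mu\ge0$ for every $\mu\in\mathcal{M}^f(X)$ and $1\le i\le d$, with strict inequality whenever $\int\varphi_i\,d\mu=0$. $I(\Phi,\Psi)=\left\{\left(\frac{\int\varphi_1d\mu}{\int\psi_1d\mu},\dots,\frac{\int\varphi_dd\mu}{\int\psi_dd\mu}\right)\mid\mu\in\mathcal{M}^f(X)\right\}$. For $\alpha\in\mathbb{R}^d$, $J(\Phi,\Psi,\alpha)=\{\int(\Phi-\alpha*\Psi)\,d\mu\mid\mu\in\mathcal{M}^f(X)\}\subset\mathbb{R}^d$, and $I_0(\Phi,\Psi)=\{\alpha\in\mathbb{R}^d\mid0\in\operatorname{int}J(\Phi,\Psi,\alpha)\}$. *)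

From HB Require Import structures.
From mathcomp Require Import all_boot all_order all_algebra.
From mathcomp Require Import all_classical all_reals all_analysis.
Set Implicit Arguments. Unset Strict Implicit. Unset Printing Implicit Defensive.
Import Order.TTheory GRing.Theory Num.Theory.
Import numFieldNormedType.Exports.
Local Open Scope classical_set_scope.
Local Open Scope ring_scope.

Definition Borel (X : ptopologicalType) := g_sigma_algebraType (@open X).

Section Dyn.
Variables (R : realType) (X : pseudoPMetricType R).

Definition separated (f : X -> X) (n : nat) (eps : R) (E : seq X) : Prop :=
  uniq E /\
  forall x y, x \in E -> y \in E -> x != y ->
    exists k, (k < n)%N /\ ~ ball (iter k f x) eps (iter k f y).

Definition sep_num (f : X -> X) (n : nat) (eps : R) : \bar R :=
  ereal_sup ((fun E : seq X => ((size E)%:R)%:E) @` [set E | separated f n eps E]).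

Definition sep_growth (f : X -> X) (eps : R) : \bar R :=
  limn_esup (fun n : nat => ((n.+1%:R)^-1)%:E * lne (sep_num f n.+1 eps))%E.

(* h_top(f) = lim_{eps -> 0} sep_growth f eps = sup_{eps > 0} sep_growth f eps
   (sep_growth f is nonincreasing in eps). *)
Definition htop (f : X -> X) : \bar R :=
  ereal_sup [set sep_growth f eps | eps in [set e : R | 0 < e]].

Definition invariant_prob (f : X -> X) (mu : probability (Borel X) R) : Prop :=
  forall A : set (Borel X), measurable A -> mu (f @^-1` A) = mu A.

Definition integ (mu : probability (Borel X) R) (g : X -> R) : R :=
  Rintegral mu setT g.

Definition condQ (f : X -> X) (d : nat) (Phi Psi : 'I_d -> X -> R) : Prop :=
  forall mu : probability (Borel X) R, invariant_prob f mu ->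
    forall i : 'I_d,
      0 <= integ mu (Psi i) /\
      (integ mu (Phi i) = 0 -> 0 < integ mu (Psi i)).

(* I(Phi,Psi), as a subset of R^d: the real vectors of ratios
   (\int phi_i dmu / \int psi_i dmu)_i, mu ranging over M^f(X)
   (only measures with all \int psi_i dmu <> 0 give a point of R^d). *)
Definition Iset (f : X -> X) (d : nat) (Phi Psi : 'I_d -> X -> R) : set 'rV[R]_d :=
  [set v | exists mu : probability (Borel X) R, invariant_prob f mu /\
     forall i : 'I_d, integ mu (Psi i) != 0 /\
                      v ord0 i = integ mu (Phi i) / integ mu (Psi i)].

Definition Jset (f : X -> X) (d : nat) (Phi Psi : 'I_d -> X -> R)
    (alpha : 'rV[R]_d) : set 'rV[R]_d :=
  [set v | exists mu : probability (Borel X) R, invariant_prob f mu /\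
     v = \row_(i < d) integ mu (fun x => Phi i x - alpha ord0 i * Psi i x)].

Definition I0set (f : X -> X) (d : nat) (Phi Psi : 'I_d -> X -> R) : set 'rV[R]_d :=
  [set alpha | (interior (Jset f Phi Psi alpha)) 0].

End Dyn.

(** The vector [J(alpha)] of integrals of [Phi - alpha * Psi] over invariant
    measures is convex, since the invariant probabilities are.  A convex set
    in [R^d] contains a point as soon as it meets every open orthant at that
    point.  If [0] is interior to [J(alpha)], measures realising the corners
    [(+-r/2, ..., +-r/2)] of a small cube keep realising every orthant of [0]
    after [alpha] is moved slightly to [beta]; so [0] lies in [J(beta)], and
    condition (Q) turns such a measure into one with ratio vector [beta].
    Conversely, measures with ratio vectors at the corners of a cube around
    [alpha] have, by (Q), positive [\int psi_i], hence integrals of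
    [Phi - alpha * Psi] at the corners of a box around [0]; convexity then
    fills a neighbourhood of [0]. *)
From HB Require Import structures.
From mathcomp Require Import all_boot all_order all_algebra.
From mathcomp Require Import all_classical all_reals all_analysis.
From mathcomp Require Import measurable_realfun.
From mathcomp Require Import ring lra zify.
Set Implicit Arguments. Unset Strict Implicit. Unset Printing Implicit Defensive.
Import Order.TTheory GRing.Theory Num.Theory.
Import numFieldNormedType.Exports.
Local Open Scope classical_set_scope.
Local Open Scope ring_scope.

Section integral_mscale.
Local Open Scope ereal_scope.
Context d (T : measurableType d) (R : realType).
Variables (k : {nonneg R}) (m : {measure set T -> \bar R}) (D : set T).
Hypothesis mD : measurable D.
Variable f : T -> \bar R.
Hypothesis intf : m.-integrable D f.

Lemma integrable_mscale : (mscale k m).-integrable D f.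
Proof.
have [mf fley] := integrableP _ _ _ intf.
apply/integrableP; split => //.
rewrite ge0_integral_mscale //.
  by rewrite lte_mul_pinfty.
exact: measurable_int _ (integrable_abse intf).
Qed.

Lemma integral_mscale :
  \int[mscale k m]_(x in D) f x = k%:num%:E * \int[m]_(x in D) f x.
Proof.
have mf := measurable_int _ intf.
rewrite [LHS]integralE [X in _ * X]integralE.
rewrite (ge0_integral_mscale m mD k (measurable_funepos mf)) //.
rewrite (ge0_integral_mscale m mD k (measurable_funeneg mf)) //.
rewrite [RHS]muleBr //; apply: fin_num_adde_defl; rewrite fin_numN.
exact: integrable_fin_num (integrable_funeneg mD intf).
Qed.

End integral_mscale.

Section probability_mix.
Context d (T : measurableType d) (R : realType).
Variables (l : R) (l0 : 0 <= l) (l1 : l <= 1) (mu nu : probability T R).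

Let l0' : 0 <= 1 - l. Proof. by rewrite subr_ge0. Qed.

Definition mix_measure :=
  measure_add (mscale (NngNum l0) mu) (mscale (NngNum l0') nu).

Let mix_measureE A : mix_measure A = (l%:E * mu A + (1 - l)%:E * nu A)%E.
Proof. by rewrite /mix_measure measure_addE. Qed.

HB.instance Definition _ := Measure.on mix_measure.

Let mix_measure_setT : mix_measure [set: T] = 1%E.
Proof. by rewrite mix_measureE !probability_setT !mule1 -EFinD subrKC. Qed.

HB.instance Definition _ :=
  Measure_isProbability.Build _ _ _ mix_measure mix_measure_setT.

Definition probability_mix : probability T R := mix_measure.

Lemma probability_mixE A :
  probability_mix A = (l%:E * mu A + (1 - l)%:E * nu A)%E.
Proof. exact: mix_measureE. Qed.

Lemma Rintegral_probability_mix (g : T -> R) :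
  mu.-integrable setT (EFin \o g) -> nu.-integrable setT (EFin \o g) ->
  Rintegral probability_mix setT g =
    l * Rintegral mu setT g + (1 - l) * Rintegral nu setT g.
Proof.
move=> imu inu.
rewrite /Rintegral integral_measure_add //; try exact: integrable_mscale.
rewrite !integral_mscale //= fineD ?fin_numM ?integrable_fin_num //.
by rewrite !fineM ?integrable_fin_num.
Qed.

End probability_mix.

Section continuous_integrable.
Context (R : realType) (X : pseudoPMetricType R).

Lemma continuous_Borel_measurable (g : X -> R) : continuous g ->
  measurable_fun (setT : set (Borel X)) (g : Borel X -> R).
Proof.
move=> cg; apply: (measurability _ (RGenOpens.measurableE R)).
move=> _ [_ [a [b ->]] <-]; rewrite setTI.
apply: sub_sigma_algebra; apply: (proj1 (continuousP g) cg).
exact: interval_open.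
Qed.

Lemma continuous_integrable (mu : probability (Borel X) R) (g : X -> R) :
  compact [set: X] -> continuous g ->
  mu.-integrable setT (EFin \o (g : Borel X -> R)).
Proof.
move=> cX cg; apply: measurable_bounded_integrable => //.
- by rewrite (le_lt_trans (probability_le1 mu measurableT)) ?ltry.
- exact: continuous_Borel_measurable.
have : compact (g @` [set: X]).
  by apply: continuous_compact => //; exact: continuous_subspaceT.
move=> /compact_bounded; rewrite /bounded_near /= => gB.
apply: (filterS _ gB) => M gM x _.
by apply: gM; exists x.
Qed.

End continuous_integrable.

Section orthants.
Variable R : realFieldType.

Definition on_side (b : bool) (a c : R) := if b then a < c else c < a.

Definition signed (b : bool) (c : R) := if b then c else - c.

Lemma on_side_conv b a x y l : on_side b a x -> on_side b a y ->
  0 <= l -> l <= 1 -> on_side b a (l * x + (1 - l) * y).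
Proof.
move=> ax ay l0 l1.
have conv_gt0 p q : 0 < p -> 0 < q -> 0 < l * p + (1 - l) * q.
  move=> p0 q0; have [->|lneq0] := eqVneq l 0; first by lra.
  have : 0 < l * p by rewrite mulr_gt0 // lt_def lneq0.
  have : 0 <= (1 - l) * q by apply: mulr_ge0; lra.
  lra.
case: b ax ay => /= ax ay.
- by have := conv_gt0 (x - a) (y - a); rewrite !subr_gt0 => /(_ ax ay); lra.
- by have := conv_gt0 (a - x) (a - y); rewrite !subr_gt0 => /(_ ax ay); lra.
Qed.

Lemma on_side_signed b a c y : `|y - (a + signed b c)| < c -> on_side b a y.
Proof. by case: b; rewrite /= ltr_norml => /andP[]; lra. Qed.

Lemma convex_weight_between (a b c : R) : b < c -> c < a ->
  exists l, [/\ 0 <= l, l <= 1 & l * a + (1 - l) * b = c].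
Proof.
move=> bc ca; have ab : 0 < a - b by lra.
exists ((c - b) / (a - b)); split.
- by rewrite divr_ge0 //; lra.
- by rewrite ler_pdivrMr //; lra.
- by field; rewrite gt_eqF.
Qed.

Variables (d : nat) (K : set 'rV[R]_d) (v : 'rV[R]_d).
Hypothesis convK : forall x y l, K x -> K y -> 0 <= l -> l <= 1 ->
  K (l *: x + (1 - l) *: y).

Definition meets_orthants_below k := forall s : {ffun 'I_d -> bool},
  exists2 w, K w & forall i : 'I_d,
    if (i < k)%N then on_side (s i) (v ord0 i) (w ord0 i)
    else w ord0 i == v ord0 i.

Lemma meets_orthants_belowS k :
  meets_orthants_below k.+1 -> meets_orthants_below k.
Proof.
move=> Kk s; have [dk|kd] := leqP d k.
  have [w Kw wv] := Kk s; exists w => // i.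
  by have := wv i; rewrite !ifT //; have := ltn_ord i; lia.
pose j : 'I_d := Ordinal kd.
pose sj b := [ffun i => if i == j then b else s i].
have [wp Kp wpv] := Kk (sj true); have [wm Km wmv] := Kk (sj false).
have := wpv j; have := wmv j; rewrite ltnSn !ffunE eqxx /= => wmj wpj.
have [l [l0 l1 lj]] := convex_weight_between wmj wpj.
exists (l *: wp + (1 - l) *: wm); first exact: convK.
move=> i; rewrite !mxE; have [->|ij] := eqVneq i j; first by rewrite /= ltnn lj.
have ij' : (i < k)%N = (i < k.+1)%N.
  by move: ij; rewrite -(inj_eq val_inj) /=; lia.
have := wpv i; have := wmv i; rewrite !ffunE (negbTE ij) -ij'.
case: ifP => _ wmi wpi; first exact: on_side_conv.
by apply/eqP; rewrite (eqP wmi) (eqP wpi); ring.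
Qed.

Lemma convex_mem_of_orthants : (forall s : {ffun 'I_d -> bool},
  exists2 w, K w & forall i : 'I_d, on_side (s i) (v ord0 i) (w ord0 i)) -> K v.
Proof.
move=> Kd; suff /(_ d): forall k, meets_orthants_below k -> K v.
  apply; move=> s; have [w Kw wv] := Kd s; exists w => // i.
  by rewrite ltn_ord.
elim=> [K0|k IHk /meets_orthants_belowS //].
have [w Kw wv] := K0 [ffun => true].
by have -> : v = w by apply/rowP => i; have := wv i; rewrite ltn0 => /eqP.
Qed.

End orthants.

Lemma finite_pos_lower_bound (R : realDomainType) (T : finType) (g : T -> R) :
  (forall t, 0 < g t) -> exists2 e : R, 0 < e & forall t, e <= g t.
Proof.
move=> gp.
suff [e e0 ge] : exists2 e : R, 0 < e & forall t, t \in enum T -> e <= g t.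
  by exists e => // t; apply: ge; rewrite mem_enum.
elim: (enum T) => [|a s [e e0 ge]]; first by exists 1.
exists (Num.min e (g a)); first by rewrite lt_min e0 gp.
move=> t; rewrite inE => /orP[/eqP ->|ts]; first by rewrite ge_min lexx orbT.
by rewrite ge_min ge.
Qed.

Lemma ball_rowP (R : numFieldType) d (x y : 'rV[R]_d) e : 0 < e ->
  ball x e y <-> forall i, `|x ord0 i - y ord0 i| < e.
Proof.
move=> e0; split; first by move=> [_ xy] i; exact: xy.
by move=> xy; split => // i j; rewrite (ord1 i); exact: xy.
Qed.

Definition signed_row (R : realFieldType) d (s : {ffun 'I_d -> bool}) (c : R) :
  'rV[R]_d := \row_i signed (s i) c.

Lemma ball_add_signed_row (R : realFieldType) d (x : 'rV[R]_d) s (c e : R) :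
  0 < c -> c < e -> ball x e (x + signed_row s c).
Proof.
move=> c0 ce; apply/ball_rowP => [|i]; first exact: lt_trans ce.
rewrite !mxE opprD addrA subrr add0r normrN.
by case: (s i); rewrite /= ?normrN gtr0_norm.
Qed.

Section ratio_sets.
Context (R : realType) (X : pseudoPMetricType R) (cX : compact [set: X])
  (f : X -> X) (d : nat) (Phi Psi : 'I_d -> X -> R)
  (cPhi : forall i, continuous (Phi i)) (cPsi : forall i, continuous (Psi i)).

Let continuous_scale (a : R) i : continuous (fun x => a * Psi i x).
Proof.
move=> x; apply: (@continuousM _ _ (fun=> a) (Psi i)).
- exact: cst_continuous.
- exact: cPsi.
Qed.

Let continuous_sub_scale (a : R) i :
  continuous (fun x => Phi i x - a * Psi i x).
Proof.
move=> x; apply: (@continuousB _ _ _ (Phi i) (fun x => a * Psi i x)).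
- exact: cPhi.
- exact: continuous_scale.
Qed.

Let integrable_sub_scale (mu : probability (Borel X) R) (a : R) i :
  mu.-integrable setT
    (EFin \o ((fun x => Phi i x - a * Psi i x) : Borel X -> R)).
Proof. exact: continuous_integrable. Qed.

Lemma integ_sub_scale (mu : probability (Borel X) R) (a : R) i :
  integ mu (fun x => Phi i x - a * Psi i x) =
  integ mu (Phi i) - a * integ mu (Psi i).
Proof.
rewrite /integ RintegralB //; [|exact: continuous_integrable..].
by rewrite RintegralZl //; exact: continuous_integrable.
Qed.

Lemma JsetP (alpha v : 'rV[R]_d) :
  Jset f Phi Psi alpha v <-> exists2 mu, invariant_prob f mu &
    forall i, v ord0 i = integ mu (Phi i) - alpha ord0 i * integ mu (Psi i).
Proof.
split=> [[mu [fmu ->]]|[mu fmu vmu]]; exists mu => //.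
- by move=> i; rewrite mxE integ_sub_scale.
- by split => //; apply/rowP => i; rewrite mxE integ_sub_scale vmu.
Qed.

Lemma invariant_probability_mix (l : R) (l0 : 0 <= l) (l1 : l <= 1)
    (mu nu : probability (Borel X) R) :
  invariant_prob f mu -> invariant_prob f nu ->
  invariant_prob f (probability_mix l0 l1 mu nu).
Proof. by move=> fmu fnu A mA; rewrite !probability_mixE fmu // fnu. Qed.

Lemma Jset_convex (alpha x y : 'rV[R]_d) (l : R) :
  Jset f Phi Psi alpha x -> Jset f Phi Psi alpha y -> 0 <= l -> l <= 1 ->
  Jset f Phi Psi alpha (l *: x + (1 - l) *: y).
Proof.
move=> [mu [fmu ->]] [nu [fnu ->]] l0 l1.
exists (probability_mix l0 l1 mu nu).
split; first exact: invariant_probability_mix.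
by apply/rowP => i; rewrite !mxE /integ Rintegral_probability_mix.
Qed.

Lemma Jset_of_orthants (alpha v : 'rV[R]_d) : (forall s : {ffun 'I_d -> bool},
    exists2 mu, invariant_prob f mu & forall i, on_side (s i) (v ord0 i)
      (integ mu (Phi i) - alpha ord0 i * integ mu (Psi i))) ->
  Jset f Phi Psi alpha v.
Proof.
move=> Jorth; apply: convex_mem_of_orthants (@Jset_convex alpha) _ => s.
have [mu fmu mus] := Jorth s.
exists (\row_i (integ mu (Phi i) - alpha ord0 i * integ mu (Psi i))).
  by apply/JsetP; exists mu => // i; rewrite mxE.
by move=> i; rewrite mxE.
Qed.

Hypothesis hQ : condQ f Phi Psi.

Lemma Iset_of_Jset0 (beta : 'rV[R]_d) :
  Jset f Phi Psi beta 0 -> Iset f Phi Psi beta.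
Proof.
move=> /JsetP[mu fmu Jmu]; exists mu; split => // i.
have := Jmu i; rewrite mxE => /esym /eqP; rewrite subr_eq0 => /eqP A_eq.
have [B_ge0 B_gt0] := hQ fmu i.
have B_neq0 : integ mu (Psi i) != 0.
  by apply/eqP => B0; move: B_gt0; rewrite A_eq B0 mulr0 ltxx => /(_ erefl).
by rewrite A_eq mulfK.
Qed.

Lemma I0set_sub_interior_Iset : I0set f Phi Psi `<=` interior (Iset f Phi Psi).
Proof.
move=> alpha /nbhs_ballP[r /= r0 Jball]; have r2 : 0 < r / 2 by lra.
have corner_measure (s : {ffun 'I_d -> bool}) : exists mu,
    invariant_prob f mu /\ forall i,
      integ mu (Phi i) - alpha ord0 i * integ mu (Psi i) = signed (s i) (r / 2).
  have /JsetP[mu fmu Jmu] : Jset f Phi Psi alpha (signed_row s (r / 2)).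
    apply: Jball; rewrite -[signed_row _ _]add0r.
    by apply: ball_add_signed_row; lra.
  by exists mu; split => // i; rewrite -Jmu mxE.
have [mus hmus] := choice corner_measure.
pose B (p : {ffun 'I_d -> bool} * 'I_d) := integ (mus p.1) (Psi p.2).
have [e e0 eB] : exists2 e : R, 0 < e & forall p, e * (1 + `|B p|) <= r / 2.
  have [e e0 eB] := @finite_pos_lower_bound _ _ (fun p => r / 2 / (1 + `|B p|))
    (fun p => divr_gt0 r2 (ltr_pwDl ltr01 (normr_ge0 _))).
  by exists e => // p; rewrite -ler_pdivlMr ?eB // ltr_pwDl.
apply/nbhs_ballP; exists e => // beta /(@ball_rowP _ _ _ _ _ e0) beta_near.
apply: Iset_of_Jset0; apply: Jset_of_orthants => s.
exists (mus s); first exact: (hmus s).1.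
move=> i; apply: (@on_side_signed _ _ _ (r / 2)).
rewrite mxE add0r -(hmus s).2.
have -> : integ (mus s) (Phi i) - beta ord0 i * integ (mus s) (Psi i) -
    (integ (mus s) (Phi i) - alpha ord0 i * integ (mus s) (Psi i)) =
    (alpha ord0 i - beta ord0 i) * B (s, i) by rewrite /B /=; ring.
have := eB (s, i); have := beta_near i; rewrite normrM.
have := normr_ge0 (B (s, i)); have := normr_ge0 (alpha ord0 i - beta ord0 i).
nra.
Qed.

Lemma interior_Iset_sub_I0set : interior (Iset f Phi Psi) `<=` I0set f Phi Psi.
Proof.
move=> alpha /nbhs_ballP[r /= r0 Iball]; have r2 : 0 < r / 2 by lra.
have corner_ratio (s : {ffun 'I_d -> bool}) :
    Iset f Phi Psi (alpha + signed_row s (r / 2)).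
  by apply: Iball; apply: ball_add_signed_row; lra.
have [mus hmus] := choice corner_ratio.
pose B (p : {ffun 'I_d -> bool} * 'I_d) := integ (mus p.1) (Psi p.2).
have B_gt0 p : 0 < B p.
  have [B_ge0 _] := hQ (hmus p.1).1 p.2.
  by rewrite lt_def B_ge0 andbT; exact: ((hmus p.1).2 p.2).1.
have [e e0 eB] := @finite_pos_lower_bound _ _ (fun p => r / 2 * B p)
  (fun p => mulr_gt0 r2 (B_gt0 p)).
apply/nbhs_ballP; exists e => // v /(@ball_rowP _ _ _ _ _ e0) v_near.
apply: Jset_of_orthants => s; exists (mus s); first exact: (hmus s).1.
move=> i; apply: (@on_side_signed _ _ _ (r / 2 * B (s, i))).
have [B_neq0 ratio] := (hmus s).2 i.
have -> : integ (mus s) (Phi i) - alpha ord0 i * integ (mus s) (Psi i) =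
    signed (s i) (r / 2 * B (s, i)).
  move: ratio; rewrite !mxE => /(congr1 ( *%R^~ (B (s, i)))); rewrite mulfVK //.
  by rewrite /B /= => <-; case: (s i) => /=; ring.
rewrite opprD addrCA subrr addr0 normrN.
by have := v_near i; rewrite mxE sub0r normrN => /lt_le_trans; apply; exact: eB.
Qed.

End ratio_sets.

Theorem lemma4p7 (R : realType) (X : pseudoPMetricType R)
  (hX : hausdorff_space X) (cX : compact [set: X])
  (f : X -> X) (cf : continuous f)
  (hf : (htop f < +oo)%E)
  (d : nat) (Phi Psi : 'I_d -> X -> R)
  (cPhi : forall i, continuous (Phi i)) (cPsi : forall i, continuous (Psi i))
  (hQ : condQ f Phi Psi) :
  I0set f Phi Psi = interior (Iset f Phi Psi).
Proof.
apply/seteqP; split.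
- exact: I0set_sub_interior_Iset.
- exact: interior_Iset_sub_I0set.
Qed.
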